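(* Consider a Markov coding game and the MEME sender policy $\pi_{\mid M}$ constructed from an MDP policy $\pi$ (as described in the context). Then, in expectation over messages $M\sim\mu$, the expected cumulative MDP reward of the message-conditional policy equals that of $\pi$: \[\mathbb{E}\left[\mathcal{R}(Z)\mid \pi_{\mid M}\right]=\mathbb{E}\left[\mathcal{R}(Z)\mid \pi\right],\] where $Z$ is the terminal trajectory and $\mathcal{R}(Z)=\sum_j \mathcal{R}(s^j,a^j)$ is the reward accumulated along it.
   Context: A (finite, episodic) Markov decision process is $\langle \mathcal{S},\mathcal{A},\mathcal{R},\mathcal{T}\rangle$ with finite state set $\mathcal{S}$, finite action set $\mathcal{A}$, reward $\mathcal{R}:\mathcal{S}\times\mathcal{A}\to\mathbb{R}$ and transition function $\mathcal{T}:\mathcal{S}\times\mathcal{A}\to\Delta(\mathcal{S})$; episodes terminate after finitely many steps. A Markov coding game (MCG) is $\langle(\mathcal{S},\mathcal{A},\mathcal{T},\mathcal{R}),\mathcal{M},\mu,\zeta\rangle$ where $\mathcal{M}$ is a finite message set, $\mu\in\Delta(\mathcal{M})$ is the prior, and $\zeta\ge 0$. A message $M\sim\mu$ is revealed to the sender, who plays the MDP with a message-conditional policy $\pi_{\mid M}$ (mapping states and messages to $\Delta(\mathcal{A})$, possibly depending on time/history), producing a terminal trajectory $Z$; the receiver observes $Z$ and guesses $\hat M$. A minimum entropy coupling $\mathrm{MEC}(p,q)$ of distributions $p\in\Delta(\mathcal{M})$ and $q\in\Delta(\mathcal{A})$ is a joint distribution $\nu$ on $\mathcal{M}\times\mathcal{A}$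 whose marginals are $p$ and $q$ and whose joint entropy is minimal among all such joint distributions. MEME sender: given an MDP policy $\pi:\mathcal{S}\to\Delta(\mathcal{A})$ (obtained by maximum entropy RL), set $b^0=\mu$; at time $t$ in state $s^t$ with current posterior $b^t=\mathcal{P}(M\mid h^t,\pi_{\mid M}^{:t})$ (the posterior over the message given the history $h^t=(s^0,a^0,\dots,s^t)$ and the sender's policy used so far), compute $\nu=\mathrm{MEC}(b^t,\pi(s^t))$ and act according to $\pi_{\mid M}(s^t,m)=\nu(A\mid M=m)$; after observing the chosen action, $b^{t+1}$ is obtained by Bayesian updating of $b^t$ with likelihood $\pi_{\mid M}(s^t,\cdot)(a^t)$. $\mathbb{E}[\cdot\mid\pi]$ denotes expectation over trajectories generated by following $\pi$ in the MDP. *)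

From mathcomp Require Import all_boot all_order all_algebra.
From mathcomp Require Import reals exp.
Set Implicit Arguments.
Unset Strict Implicit.
Unset Printing Implicit Defensive.
Import Order.TTheory GRing.Theory Num.Theory.
Local Open Scope ring_scope.

Section MCG.
Variable R : realType.

Definition is_dist (T : finType) (p : {ffun T -> R}) : Prop :=
  (forall x, 0 <= p x) /\ \sum_x p x = 1.

Definition is_coupling (M A : finType) (p : {ffun M -> R}) (q : {ffun A -> R})
  (nu : {ffun M * A -> R}) : Prop :=
  (forall x, 0 <= nu x) /\
  (forall m, \sum_a nu (m, a) = p m) /\
  (forall a, \sum_m nu (m, a) = q a).

Definition entropy (T : finType) (p : {ffun T -> R}) : R :=
  - \sum_x (if p x == 0 then 0 else p x * ln (p x)).

Definition is_MEC (M A : finType) (p : {ffun M -> R}) (q : {ffun A -> R})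
  (nu : {ffun M * A -> R}) : Prop :=
  is_coupling p q nu /\
  forall nu', is_coupling p q nu' -> entropy nu <= entropy nu'.

(* conditional nu(A | M = m); arbitrary convention (q) when p m = 0 *)
Definition cond_act (M A : finType) (p : {ffun M -> R}) (q : {ffun A -> R})
  (nu : {ffun M * A -> R}) (m : M) : {ffun A -> R} :=
  if p m == 0 then q else [ffun a => nu (m, a) / p m].

Section Traj.
Variables (S A : finType).
Variable (Rew : S -> A -> R) (T : S -> A -> {ffun S -> R}).

(* A general history-dependent policy: history (s^0,a^0,...,s^{t-1},a^{t-1})
   and current state s^t give a distribution over actions. *)
Definition hpolicy := seq (S * A) -> S -> {ffun A -> R}.

(* probability of the sequence of state-action pairs z, continuing history h,
   when the current state is distributed as init *)
Fixpoint traj_prob (pol : hpolicy) (h : seq (S * A)) (init : {ffun S -> R})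
  (z : seq (S * A)) : R :=
  match z with
  | [::] => 1
  | (s, a) :: z' => init s * pol h s a * traj_prob pol (rcons h (s, a)) (T s a) z'
  end.

Definition traj_reward (z : seq (S * A)) : R := \sum_(p <- z) Rew p.1 p.2.

Definition expected_reward (H : nat) (d0 : {ffun S -> R}) (pol : hpolicy) : R :=
  \sum_(z : H.-tuple (S * A)) traj_prob pol [::] d0 z * traj_reward z.

Definition stat_policy (pi : S -> {ffun A -> R}) : hpolicy := fun _ s => pi s.

Variable M : finType.
Variable mec : {ffun M -> R} -> {ffun A -> R} -> {ffun M * A -> R}.
Variable pi : S -> {ffun A -> R}.

Definition meme_act (b : {ffun M -> R}) (s : S) (m : M) : {ffun A -> R} :=
  cond_act b (pi s) (mec b (pi s)) m.

Definition meme_update (b : {ffun M -> R}) (s : S) (a : A) : {ffun M -> R} :=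
  let Z := \sum_m b m * meme_act b s m a in
  if Z == 0 then b else [ffun m => b m * meme_act b s m a / Z].

Definition meme_belief (mu : {ffun M -> R}) (h : seq (S * A)) : {ffun M -> R} :=
  foldl (fun b sa => meme_update b sa.1 sa.2) mu h.

Definition meme_policy (mu : {ffun M -> R}) (m : M) : hpolicy :=
  fun h s => meme_act (meme_belief mu h) s m.

End Traj.
End MCG.

From mathcomp Require Import all_boot all_order all_algebra.
From mathcomp Require Import reals exp.
Import Order.TTheory GRing.Theory Num.Theory.
Local Open Scope ring_scope.

(* Bayes' rule makes the mixture work: if the posterior b^t over messages
   satisfies b^t(m) pi_m(a | h, s) = pi(a | h, s) b^{t+1}(m), with pi the
   b^t-average of the message-conditional policies pi_m, then averaging the
   trajectory laws of the pi_m over b^0 = mu gives the trajectory law of pi, by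
   induction along the trajectory.  For MEME, b^t(m) pi_{|M}(s, m)(a) is the
   coupling nu(m, a), whose action marginal is pi(s)(a), so this average is the
   MDP policy itself. *)

Section Coupling.
Variables (R : realType) (M A : finType).
Variables (p : {ffun M -> R}) (q : {ffun A -> R}) (nu : {ffun M * A -> R}).
Hypothesis nu_coupling : is_coupling p q nu.

Lemma mul_cond_act m a : p m * cond_act p q nu m a = nu (m, a).
Proof.
have [nu_ge0 [nu_margM _]] := nu_coupling.
rewrite /cond_act; have [pm0 | pm_neq0] := eqVneq (p m) 0; last first.
  by rewrite ffunE mulrC divfK.
rewrite pm0 mul0r; apply/esym; move: (nu_margM m); rewrite pm0.
by move/(psumr_eq0P (fun a' _ => nu_ge0 (m, a'))); apply.
Qed.

Lemma sum_mul_cond_act a : \sum_m p m * cond_act p q nu m a = q a.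
Proof.
have [_ [_ <-]] := nu_coupling.
by apply: eq_bigr => m _; rewrite mul_cond_act.
Qed.

End Coupling.

Section Mixture.
Variables (R : realType) (S A M : finType) (T : S -> A -> {ffun S -> R}).
Variables (pol : M -> hpolicy R S A) (marg : hpolicy R S A).
Variable belief : seq (S * A) -> {ffun M -> R}.
Hypothesis belief_sum1 : forall h, \sum_m belief h m = 1.
Hypothesis belief_bayes : forall h s a m,
  belief h m * pol m h s a = marg h s a * belief (rcons h (s, a)) m.

Lemma traj_prob_mixture z h init :
  \sum_m belief h m * traj_prob T (pol m) h init z = traj_prob T marg h init z.
Proof.
elim: z h init => [|[s a] z IHz] h init /=.
  by under eq_bigr do rewrite mulr1; exact: belief_sum1.
rewrite -IHz mulr_sumr; apply: eq_bigr => m _.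
by rewrite !mulrA (mulrC _ (init s)) -(mulrA _ (belief h m)) belief_bayes !mulrA.
Qed.

Lemma expected_reward_mixture Rew H d0 :
  \sum_m belief [::] m * expected_reward Rew T H d0 (pol m)
  = expected_reward Rew T H d0 marg.
Proof.
rewrite /expected_reward; under eq_bigr do rewrite mulr_sumr.
rewrite exchange_big; apply: eq_bigr => z _.
rewrite -traj_prob_mixture mulr_suml.
by apply: eq_bigr => m _; rewrite mulrA.
Qed.

End Mixture.

Section Meme.
Variables (R : realType) (S A M : finType).
Variable pi : S -> {ffun A -> R}.
Variable mec : {ffun M -> R} -> {ffun A -> R} -> {ffun M * A -> R}.
Hypothesis pi_dist : forall s, is_dist (pi s).
Hypothesis mec_MEC : forall p q, is_dist p -> is_dist q -> is_MEC p q (mec p q).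

Section Posterior.
Variable b : {ffun M -> R}.
Hypothesis b_dist : is_dist b.

Let mec_coupling s : is_coupling b (pi s) (mec b (pi s)).
Proof. exact: proj1 (mec_MEC _ _ b_dist (pi_dist s)). Qed.

Lemma meme_act_ge0 s m a : 0 <= b m * meme_act mec pi b s m a.
Proof. by rewrite mul_cond_act //; apply: (proj1 (mec_coupling s)). Qed.

Lemma sum_meme_act s a : \sum_m b m * meme_act mec pi b s m a = pi s a.
Proof. exact: sum_mul_cond_act. Qed.

Lemma meme_update_bayes s a m :
  b m * meme_act mec pi b s m a = pi s a * meme_update mec pi b s a m.
Proof.
rewrite /meme_update sum_meme_act; have [pi0 | pi_neq0] := eqVneq (pi s a) 0.
  rewrite pi0 mul0r; move: (sum_meme_act s a); rewrite pi0.
  by move/psumr_eq0P; apply=> // m' _; exact: meme_act_ge0.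
by rewrite ffunE mulrCA divff ?mulr1.
Qed.

Lemma meme_update_dist s a : is_dist (meme_update mec pi b s a).
Proof.
rewrite /meme_update sum_meme_act; have [// | pi_neq0] := eqVneq (pi s a) 0.
have pi_gt0 : 0 < pi s a by rewrite lt0r pi_neq0 (proj1 (pi_dist s)).
split=> [m | ]; first by rewrite ffunE divr_ge0 ?meme_act_ge0 ?ltW.
under eq_bigr do rewrite ffunE.
by rewrite -mulr_suml sum_meme_act divff.
Qed.

End Posterior.

Lemma meme_belief_rcons mu h s a :
  meme_belief mec pi mu (rcons h (s, a))
  = meme_update mec pi (meme_belief mec pi mu h) s a.
Proof. exact: foldl_rcons. Qed.

Lemma meme_belief_dist mu h : is_dist mu -> is_dist (meme_belief mec pi mu h).
Proof.
move=> mu_dist; elim/last_ind: h => // h [s a] IHh.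
by rewrite meme_belief_rcons; exact: meme_update_dist.
Qed.

End Meme.

Theorem proposition2 (R : realType) (S A M : finType)
  (Rew : S -> A -> R) (T : S -> A -> {ffun S -> R})
  (d0 : {ffun S -> R}) (mu : {ffun M -> R}) (pi : S -> {ffun A -> R})
  (mec : {ffun M -> R} -> {ffun A -> R} -> {ffun M * A -> R}) (H : nat) :
  (forall s a, is_dist (T s a)) ->
  is_dist d0 ->
  is_dist mu ->
  (forall s, is_dist (pi s)) ->
  (forall p q, is_dist p -> is_dist q -> is_MEC p q (mec p q)) ->
  \sum_m mu m * expected_reward Rew T H d0 (meme_policy mec pi mu m)
  = expected_reward Rew T H d0 (stat_policy pi).
Proof.
move=> _ _ mu_dist pi_dist mec_MEC.
have belief_dist h : is_dist (meme_belief mec pi mu h) by exact: meme_belief_dist.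
apply: (expected_reward_mixture R S A M T (meme_policy mec pi mu) (stat_policy pi)
         (meme_belief mec pi mu)).
- move=> h; exact: proj2 (belief_dist h).
- move=> h s a m; rewrite meme_belief_rcons /meme_policy /stat_policy.
  by apply: meme_update_bayes.
Qed.
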